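(* Let $\alpha,\beta,\gamma,\sigma$ be integers with $\beta\geq\gamma>\sigma\geq 0$, $\alpha+\sigma\geq 2\gamma$, $\alpha+\beta+\sigma>3$, and suppose $\gamma<\beta$. Let $$G=\Bigl\langle a,b\,\Bigm|\, a^{2^{\alpha}}=b^{2^{\beta}}=[a,b,a]=[a,b,b]=e,\ a^{2^{\alpha+\sigma-\gamma}}=[a,b]^{2^{\sigma}}\Bigr\rangle.$$ Then $G$ is capable if and only if $\alpha=\beta$ and $\gamma<\beta-1$.
   Context: A group $G$ is called capable if there exists a group $K$ such that $K/Z(K)\cong G$. Commutators are $[x,y]=x^{-1}y^{-1}xy$, left-normed: $[x,y,z]=[[x,y],z]$. *)

(* abstract (possibly infinite) groups, since capability
   quantifies over arbitrary groups K. *)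
From Stdlib Require Import Arith.

Record Grp := {
  carrier :> Type;
  gmul : carrier -> carrier -> carrier;
  gone : carrier;
  ginv : carrier -> carrier;
  gmulA : forall x y z, gmul x (gmul y z) = gmul (gmul x y) z;
  gmul1l : forall x, gmul gone x = x;
  gmul1r : forall x, gmul x gone = x;
  gmulVl : forall x, gmul (ginv x) x = gone;
  gmulVr : forall x, gmul x (ginv x) = gone
}.

Arguments gmul {g} _ _.
Arguments gone {g}.
Arguments ginv {g} _.

Fixpoint gpow {G : Grp} (x : G) (n : nat) : G :=
  match n with
  | O => gone
  | S m => gmul x (gpow x m)
  end.

Definition comm {G : Grp} (x y : G) : G :=
  gmul (gmul (gmul (ginv x) (ginv y)) x) y.

Definition is_hom {G H : Grp} (f : G -> H) : Prop :=
  forall x y : G, f (gmul x y) = gmul (f x) (f y).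

Definition central {K : Grp} (k : K) : Prop :=
  forall h : K, gmul k h = gmul h k.

(* G is capable: there is a group K with K/Z(K) isomorphic to G, i.e. a
   surjective homomorphism K -> G whose kernel is exactly Z(K). *)
Definition capable (G : Grp) : Prop :=
  exists (K : Grp) (f : K -> G),
    is_hom f /\ (forall g : G, exists k : K, f k = g) /\
    (forall k : K, f k = gone <-> central k).

Definition rels (al be ga si : nat) {H : Grp} (x y : H) : Prop :=
  gpow x (2 ^ al) = gone /\
  gpow y (2 ^ be) = gone /\
  comm (comm x y) x = gone /\
  comm (comm x y) y = gone /\
  gpow x (2 ^ (al + si - ga)) = gpow (comm x y) (2 ^ si).

(* (G, a, b) is a presentation <a, b | rels>: a, b satisfy the relations and
   G has the universal property of the presented group. *)
Definition presents (al be ga si : nat) (G : Grp) (a b : G) : Prop :=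
  rels al be ga si a b /\
  forall (H : Grp) (x y : H), rels al be ga si x y ->
    exists f : G -> H, is_hom f /\ f a = x /\ f b = y /\
      forall g : G -> H, is_hom g -> g a = x -> g b = y -> forall z, g z = f z.

(* Write c = [a, b], N = 2^(al+si-ga), M = 2^si, P = 2^ga. The relations make G a group of
   class two whose elements are the words b^j a^i c^k, and G is isomorphic to the semidirect
   product Q = Z/2^be ⋉ L, where L = <x, c | x^N = c^M, c^P = 1> is abelian and the generator
   y of Z/2^be acts by x -> x c.

   Let f : K -> G be onto with kernel Z(K) and let x, y lift a, b. Then
   z = [x, y] has central commutators t = [z, x] and s = [z, y], so that
   [x^k, y] = z^k t^C(k,2) and [x, y^k] = z^k s^C(k,2). From x^N = z^M modulo Z(K) one gets t^M = 1 and
   z^N = s^M, while s^P = 1 and s^(P/2) <> 1 because c has order P. Hence z^(2^al) = 1 and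
   z^(2^(al-1)) = s^(P/2). If al < be, then y^(2^al) commutes with x, so b^(2^al) = 1; if
   al > be, then y^(2^be) is central, so z^(2^be) = 1; if al = be = ga + 1, then y^(2^ga)
   commutes with x. Each case contradicts the orders of b or s.

   For al = be and ga < be - 1 take K = Z/2^be ⋉ (Z/2^al × L), with y acting by
   u -> u x, x -> x c. The map K -> Q sending u, x, c to x, c, 1 is onto, and its kernel is
   Z(K): an element y^g is central only if y^g fixes u, i.e. (g, C(g, 2)) vanishes in L,
   which forces 2^al | g. *)

From Stdlib Require Import Arith Lia ZArith Eqdep_dec.
From Stdlib Require Znumtheory Zpow_facts.

Local Infix "**" := gmul (at level 40, left associativity).
#[local] Arguments gmulA {g}.
#[local] Arguments gmul1l {g}.
#[local] Arguments gmul1r {g}.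
#[local] Arguments gmulVl {g}.
#[local] Arguments gmulVr {g}.

(** * Commutator calculus *)

Section GroupLemmas.
Context {G : Grp}.
Implicit Types x y z : G.

Lemma mulKg x y : ginv x ** (x ** y) = y.
Proof. now rewrite gmulA, gmulVl, gmul1l. Qed.
Lemma mulKVg x y : x ** (ginv x ** y) = y.
Proof. now rewrite gmulA, gmulVr, gmul1l. Qed.
Lemma mulgK x y : y ** x ** ginv x = y.
Proof. now rewrite <- gmulA, gmulVr, gmul1r. Qed.
Lemma mulgKV x y : y ** ginv x ** x = y.
Proof. now rewrite <- gmulA, gmulVl, gmul1r. Qed.

Lemma mulgI x y z : x ** y = x ** z -> y = z.
Proof. intro E. now rewrite <- (mulKg x y), E, mulKg. Qed.
Lemma mulIg x y z : y ** x = z ** x -> y = z.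
Proof. intro E. now rewrite <- (mulgK x y), E, mulgK. Qed.

Lemma invg_unique x y : x ** y = gone -> ginv x = y.
Proof. intro E. apply (mulgI x). now rewrite gmulVr, E. Qed.
Lemma invg1 : ginv (@gone G) = gone.
Proof. apply invg_unique, gmul1l. Qed.
Lemma invMg x y : ginv (x ** y) = ginv y ** ginv x.
Proof. apply invg_unique. now rewrite gmulA, <- (gmulA x y), gmulVr, gmul1r, gmulVr. Qed.

Lemma gpowD x m n : gpow x (m + n) = gpow x m ** gpow x n.
Proof. induction m; simpl. now rewrite gmul1l. now rewrite IHm, gmulA. Qed.
Lemma gpowM x m n : gpow x (m * n) = gpow (gpow x m) n.
Proof.
  induction n; simpl. now rewrite Nat.mul_0_r.
  now rewrite <- IHn, <- gpowD, Nat.mul_succ_r, Nat.add_comm.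
Qed.
Lemma gpow1n n : gpow (@gone G) n = gone.
Proof. induction n; simpl; [reflexivity|]. now rewrite IHn, gmul1l. Qed.
Lemma gpow1 x : gpow x 1 = x.
Proof. apply gmul1r. Qed.
Lemma gpowSr x n : gpow x (S n) = gpow x n ** x.
Proof. now rewrite <- Nat.add_1_r, gpowD, gpow1. Qed.

Lemma gpow_eq1_dvd x n m : gpow x n = gone -> Nat.divide n m -> gpow x m = gone.
Proof. intros E [k ->]. now rewrite Nat.mul_comm, gpowM, E, gpow1n. Qed.
Lemma gpow_modn x n k : n <> 0 -> gpow x n = gone -> gpow x k = gpow x (k mod n).
Proof.
  intros Hn E. rewrite (Nat.div_mod k n Hn) at 1.
  rewrite gpowD, gpowM, E, gpow1n, gmul1l. reflexivity.
Qed.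

Definition commute x y := x ** y = y ** x.

Lemma commute_sym x y : commute x y -> commute y x.
Proof. unfold commute; auto. Qed.
Lemma commute1 x : commute x gone.
Proof. unfold commute. now rewrite gmul1l, gmul1r. Qed.
Lemma commute_refl x : commute x x.
Proof. reflexivity. Qed.
Lemma commuteM x y z : commute x y -> commute x z -> commute x (y ** z).
Proof. unfold commute; intros H1 H2. now rewrite gmulA, H1, <- gmulA, H2, gmulA. Qed.
Lemma commuteV x y : commute x y -> commute x (ginv y).
Proof.
  unfold commute; intro E. apply (mulgI y).
  now rewrite gmulA, <- E, <- gmulA, gmulVr, gmul1r, mulKVg.
Qed.
Lemma commuteX x y n : commute x y -> commute x (gpow y n).
Proof. intro E. induction n; simpl. apply commute1. now apply commuteM. Qed.
Lemma commuteXX x y m n : commute x y -> commute (gpow x m) (gpow y n).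
Proof. intro E. apply commuteX, commute_sym, commuteX, commute_sym, E. Qed.
Lemma gpowMn x y n : commute x y -> gpow (x ** y) n = gpow x n ** gpow y n.
Proof.
  intro E. induction n; simpl. now rewrite gmul1l.
  rewrite IHn, <- !gmulA. f_equal. rewrite !gmulA. f_equal.
  apply commuteX, commute_sym, E.
Qed.

Lemma comm_eq1 x y : comm x y = gone <-> commute x y.
Proof.
  unfold comm, commute. split; intro E.
  - assert (E' : y ** x ** (ginv x ** ginv y ** x ** y) = x ** y).
    { rewrite !gmulA, mulgK, gmulVr, gmul1l. reflexivity. }
    now rewrite E, gmul1r in E'.
  - now rewrite <- (gmulA _ x y), E, gmulA, mulgKV, gmulVl.
Qed.
Lemma comm_of_mul_eq x y w : x ** y = y ** x ** w -> comm x y = w.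
Proof.
  intro E. unfold comm. rewrite <- (gmulA _ x y), E, !gmulA.
  now rewrite <- (gmulA (ginv x) (ginv y) y), gmulVl, gmul1r, gmulVl, gmul1l.
Qed.

Lemma swap_last x y z : commute y z -> x ** y ** z = x ** z ** y.
Proof. intro E. now rewrite <- gmulA, E, gmulA. Qed.
End GroupLemmas.

Ltac assoc_l := repeat rewrite gmulA.

Section Homomorphisms.
Context {G H : Grp} (f : G -> H) (Hf : is_hom f).

Lemma hom1 : f gone = gone.
Proof. apply (mulgI (f gone)). now rewrite <- Hf, !gmul1r. Qed.
Lemma homV x : f (ginv x) = ginv (f x).
Proof. symmetry. apply invg_unique. now rewrite <- Hf, gmulVr, hom1. Qed.
Lemma homX x n : f (gpow x n) = gpow (f x) n.
Proof. induction n; simpl. apply hom1. now rewrite Hf, IHn. Qed.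
Lemma homR x y : f (comm x y) = comm (f x) (f y).
Proof. unfold comm. now rewrite !Hf, !homV. Qed.
End Homomorphisms.

Section Conjugation.
Context {G : Grp}.
Implicit Types u g d : G.

Definition conjg u g := ginv g ** u ** g.

Lemma conjMg u v g : conjg (u ** v) g = conjg u g ** conjg v g.
Proof. unfold conjg. assoc_l. now rewrite mulgK. Qed.
Lemma conj1g g : conjg gone g = gone.
Proof. unfold conjg. now rewrite gmul1r, gmulVl. Qed.
Lemma conjXg u g k : conjg (gpow u k) g = gpow (conjg u g) k.
Proof. induction k; simpl. apply conj1g. now rewrite conjMg, IHk. Qed.
Lemma conjg_mulR u g : conjg u g = u ** comm u g.
Proof. unfold conjg, comm. assoc_l. now rewrite gmulVr, gmul1l. Qed.
Lemma commgEl u g : comm u g = ginv u ** conjg u g.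
Proof. now rewrite conjg_mulR, mulKg. Qed.
Lemma conjgM u g h : conjg u (g ** h) = conjg (conjg u g) h.
Proof. unfold conjg. rewrite invMg. now assoc_l. Qed.
Lemma conjgC u g : u ** g = g ** conjg u g.
Proof. unfold conjg. assoc_l. now rewrite gmulVr, gmul1l. Qed.
Lemma conjg_central u g : central u -> conjg u g = u.
Proof. intro Hu. unfold conjg. now rewrite <- gmulA, (Hu g), mulKg. Qed.

Lemma central_gpow d k : central d -> central (gpow d k).
Proof. intros Hd h. apply commute_sym, commuteX, commute_sym, Hd. Qed.

Lemma conjg_gpow_central u g d k :
  central d -> conjg u g = u ** d -> conjg u (gpow g k) = u ** gpow d k.
Proof.
  intros Hd E. induction k.
  - unfold conjg. simpl. now rewrite invg1, gmul1l, !gmul1r.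
  - change (gpow g (S k)) with (g ** gpow g k).
    rewrite conjgM, E, conjMg, IHk, conjg_central, gpowSr by exact Hd.
    now assoc_l.
Qed.
Lemma commXg_of_central u g k : central (comm u g) -> comm (gpow u k) g = gpow (comm u g) k.
Proof.
  intro Hc. rewrite commgEl, conjXg, conjg_mulR, gpowMn by (apply commute_sym, Hc).
  apply mulKg.
Qed.
Lemma commMg_central u k g : central k -> comm (u ** k) g = comm u g.
Proof.
  intro Hk. rewrite !commgEl, conjMg, (conjg_central k), invMg by exact Hk.
  rewrite <- gmulA, (gmulA (ginv u)), <- (Hk (ginv u ** conjg u g)), gmulA,
    <- (gmulA (ginv k)).
  apply mulKg.
Qed.
End Conjugation.

Section ClassTwo.
Context {G : Grp}.
Variables a b : G.
Let c := comm a b.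
Hypothesis c_a : commute c a.
Hypothesis c_b : commute c b.

Lemma mul_ab : a ** b = b ** a ** c.
Proof. unfold c, comm. assoc_l. now rewrite mulgK, gmulVr, gmul1l. Qed.

Lemma mul_a_bpow j : a ** gpow b j = gpow b j ** a ** gpow c j.
Proof.
  induction j; simpl gpow. { now rewrite gmul1r, gmul1l, gmul1r. }
  rewrite gmulA, mul_ab, (swap_last _ _ _ (commuteX _ _ j c_b)), <- (gmulA b a), IHj.
  assoc_l. apply swap_last, commute_sym, commuteX, commute_refl.
Qed.

Lemma mul_apow_bpow i j : gpow a i ** gpow b j = gpow b j ** gpow a i ** gpow c (i * j).
Proof.
  induction i; simpl gpow. { now rewrite gmul1l, !gmul1r. }
  rewrite <- gmulA, IHi. assoc_l. rewrite mul_a_bpow.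
  rewrite (swap_last _ _ _ (commuteXX _ _ j i c_a)).
  replace (S i * j) with (j + i * j) by lia. rewrite gpowD.
  now assoc_l.
Qed.

Lemma mul_normal_form g i k g' i' k' :
  gpow b g ** gpow a i ** gpow c k ** (gpow b g' ** gpow a i' ** gpow c k') =
  gpow b (g + g') ** gpow a (i + i') ** gpow c (i * g' + k + k').
Proof.
  rewrite !gpowD. assoc_l.
  rewrite (swap_last _ _ _ (commuteXX _ _ k g' c_b)), (swap_last _ _ _ (commuteXX _ _ k i' c_a)).
  rewrite <- (gmulA (gpow b g) (gpow a i)), mul_apow_bpow. assoc_l.
  now rewrite (swap_last _ _ _ (commuteXX _ _ _ i' c_a)).
Qed.
End ClassTwo.

Fixpoint choose2 (k : nat) : nat := match k with 0 => 0 | S k' => choose2 k' + k' end.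

Lemma double_choose2 k : 2 * choose2 k = k * (k - 1).
Proof. induction k as [|[|k] IH]; [reflexivity | reflexivity |]. simpl choose2 in *. nia. Qed.

Section ClassThree.
Context {G : Grp}.
Variables x y : G.
Let z := comm x y.
Let t := comm z x.
Let s := comm z y.
Hypothesis t_central : central t.
Hypothesis s_central : central s.

Lemma gpow_xz k : gpow (x ** z) k = gpow x k ** gpow z k ** gpow t (choose2 k).
Proof.
  induction k; simpl gpow. { now rewrite !gmul1l. }
  rewrite IHk. assoc_l.
  rewrite <- (gmulA x z), (conjgC z (gpow x k)),
    (conjg_gpow_central z x t k t_central (conjg_mulR z x)).
  assoc_l. rewrite (swap_last _ _ _ (central_gpow _ k t_central (gpow z k))).
  simpl choose2. rewrite (gpowD t). assoc_l.
  rewrite (swap_last _ _ _ (commuteXX _ _ _ _ (commute_refl t))). reflexivity.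
Qed.

Lemma commXg_class3 k : comm (gpow x k) y = gpow z k ** gpow t (choose2 k).
Proof.
  rewrite commgEl, conjXg, conjg_mulR. fold z.
  rewrite gpow_xz. assoc_l. now rewrite gmulVl, gmul1l.
Qed.

Lemma commgX_class3 k : comm x (gpow y k) = gpow z k ** gpow s (choose2 k).
Proof.
  assert (E : conjg x (gpow y k) = x ** gpow z k ** gpow s (choose2 k)).
  { induction k.
    - unfold conjg. simpl. now rewrite invg1, gmul1l, !gmul1r.
    - change (gpow y (S k)) with (y ** gpow y k).
      rewrite conjgM, (conjg_mulR x y). fold z.
      rewrite conjMg, IHk, (conjg_gpow_central z y s k s_central (conjg_mulR z y)).
      simpl choose2. rewrite gpowD, gpowSr. assoc_l.
      now rewrite (swap_last _ _ _ (central_gpow _ (choose2 k) s_central z)). }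
  rewrite commgEl, E. assoc_l. now rewrite gmulVl, gmul1l.
Qed.
End ClassThree.

(** * Groups given by normal forms *)

Section NormalFormGroup.
Variables (T : Type) (T_eq_dec : forall x y : T, {x = y} + {x <> y}) (nf : T -> T)
  (mul : T -> T -> T) (one : T) (inv : T -> T).
Hypothesis nf_idem : forall x, nf (nf x) = nf x.
Hypothesis nf_mull : forall x y, nf (mul (nf x) y) = nf (mul x y).
Hypothesis nf_mulr : forall x y, nf (mul x (nf y)) = nf (mul x y).
Hypothesis nf_inv : forall x, nf (inv (nf x)) = nf (inv x).
Hypothesis mulA : forall x y z, mul x (mul y z) = mul (mul x y) z.
Hypothesis nf_mul1l : forall x, nf (mul one x) = nf x.
Hypothesis nf_mul1r : forall x, nf (mul x one) = nf x.
Hypothesis nf_mulVl : forall x, nf (mul (inv x) x) = nf one.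
Hypothesis nf_mulVr : forall x, nf (mul x (inv x)) = nf one.

Definition nf_carrier := {x : T | nf x = x}.

Lemma nf_carrier_eq (u v : nf_carrier) : proj1_sig u = proj1_sig v -> u = v.
Proof.
  destruct u as [u Hu], v as [v Hv]; simpl. intros ->. f_equal. apply UIP_dec, T_eq_dec.
Qed.

Definition nf_mk (x : T) : nf_carrier := exist _ (nf x) (nf_idem x).

Lemma nf_mk_eq x y : nf x = nf y -> nf_mk x = nf_mk y.
Proof. intro E. now apply nf_carrier_eq. Qed.
Lemma nf_mk_val (u : nf_carrier) : nf_mk (proj1_sig u) = u.
Proof. apply nf_carrier_eq, (proj2_sig u). Qed.

Definition nf_mul (u v : nf_carrier) := nf_mk (mul (proj1_sig u) (proj1_sig v)).
Definition nf_invg (u : nf_carrier) := nf_mk (inv (proj1_sig u)).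
Definition nf_one := nf_mk one.

Lemma nf_mulA x y z : nf_mul x (nf_mul y z) = nf_mul (nf_mul x y) z.
Proof. apply nf_mk_eq. simpl. now rewrite nf_mulr, nf_mull, mulA. Qed.
Lemma nf_mul1g x : nf_mul nf_one x = x.
Proof. rewrite <- (nf_mk_val x). apply nf_mk_eq. simpl. now rewrite nf_mull, nf_mul1l, nf_idem. Qed.
Lemma nf_mulg1 x : nf_mul x nf_one = x.
Proof. rewrite <- (nf_mk_val x). apply nf_mk_eq. simpl. now rewrite nf_mulr, nf_mul1r, nf_idem. Qed.
Lemma nf_mulVg x : nf_mul (nf_invg x) x = nf_one.
Proof. apply nf_mk_eq. simpl. rewrite nf_mull. apply nf_mulVl. Qed.
Lemma nf_mulgV x : nf_mul x (nf_invg x) = nf_one.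
Proof. apply nf_mk_eq. simpl. rewrite nf_mulr. apply nf_mulVr. Qed.

Definition NFGrp : Grp := {| carrier := nf_carrier; gmul := nf_mul; gone := nf_one;
  ginv := nf_invg; gmulA := nf_mulA; gmul1l := nf_mul1g; gmul1r := nf_mulg1;
  gmulVl := nf_mulVg; gmulVr := nf_mulgV |}.

Lemma nf_mk_mul x y : @gmul NFGrp (nf_mk x) (nf_mk y) = nf_mk (mul x y).
Proof. apply nf_mk_eq. simpl. now rewrite nf_mull, nf_mulr. Qed.
Lemma nf_mk_inv x : @ginv NFGrp (nf_mk x) = nf_mk (inv x).
Proof. apply nf_mk_eq, nf_inv. Qed.
End NormalFormGroup.

Section Cyclic.
Variable n : nat.
Hypothesis n_neq0 : n <> 0.

Definition cyc_nf (j : nat) := j mod n.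
Definition cyc_opp (j : nat) := n - j mod n.

Lemma cyc_nf_idem x : cyc_nf (cyc_nf x) = cyc_nf x.
Proof. apply Nat.Div0.mod_mod. Qed.
Lemma cyc_nf_addl x y : cyc_nf (cyc_nf x + y) = cyc_nf (x + y).
Proof. apply Nat.Div0.add_mod_idemp_l. Qed.
Lemma cyc_nf_addr x y : cyc_nf (x + cyc_nf y) = cyc_nf (x + y).
Proof. apply Nat.Div0.add_mod_idemp_r. Qed.
Lemma cyc_nf_add0l x : cyc_nf (0 + x) = cyc_nf x.
Proof. reflexivity. Qed.
Lemma cyc_nf_add0r x : cyc_nf (x + 0) = cyc_nf x.
Proof. now rewrite Nat.add_0_r. Qed.
Lemma cyc_nf_addNl x : cyc_nf (cyc_opp x + x) = cyc_nf 0.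
Proof.
  unfold cyc_nf, cyc_opp. rewrite <- Nat.Div0.add_mod_idemp_r.
  assert (x mod n < n) by now apply Nat.mod_upper_bound.
  replace (n - x mod n + x mod n) with n by lia.
  now rewrite Nat.Div0.mod_same, Nat.Div0.mod_0_l.
Qed.
Lemma cyc_nf_addrN x : cyc_nf (x + cyc_opp x) = cyc_nf 0.
Proof. rewrite Nat.add_comm. apply cyc_nf_addNl. Qed.

Definition Cyc : Grp := NFGrp nat Nat.eq_dec cyc_nf plus 0 cyc_opp cyc_nf_idem
  cyc_nf_addl cyc_nf_addr Nat.add_assoc cyc_nf_add0l cyc_nf_add0r cyc_nf_addNl cyc_nf_addrN.

Definition cyc_val (g : Cyc) : nat := proj1_sig g.
Definition cyc_mk (j : nat) : Cyc := nf_mk nat cyc_nf cyc_nf_idem j.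

Lemma cyc_val_mul (g h : Cyc) : cyc_val (g ** h) = (cyc_val g + cyc_val h) mod n.
Proof. reflexivity. Qed.
Lemma cyc_val_mk j : cyc_val (cyc_mk j) = j mod n.
Proof. reflexivity. Qed.
Lemma cyc_val1 : cyc_val (@gone Cyc) = 0.
Proof. apply Nat.Div0.mod_0_l. Qed.
Lemma cyc_val_lt (g : Cyc) : cyc_val g < n.
Proof.
  destruct g as [g Hg]. unfold cyc_val; simpl. rewrite <- Hg. now apply Nat.mod_upper_bound.
Qed.
Lemma cyc_val_inj (g h : Cyc) : cyc_val g = cyc_val h -> g = h.
Proof. apply nf_carrier_eq, Nat.eq_dec. Qed.

Lemma cyc_mulC (g h : Cyc) : g ** h = h ** g.
Proof. apply cyc_val_inj. now rewrite !cyc_val_mul, Nat.add_comm. Qed.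
Lemma cyc_mk_pow j k : gpow (cyc_mk j) k = cyc_mk (k * j).
Proof.
  induction k; [now apply cyc_val_inj|].
  change (gpow (cyc_mk j) (S k)) with (cyc_mk j ** gpow (cyc_mk j) k).
  rewrite IHk. apply cyc_val_inj. now rewrite cyc_val_mul, !cyc_val_mk, <- Nat.Div0.add_mod.
Qed.
End Cyclic.

Local Open Scope Z_scope.

(* [Lat N M P] is Z^2 modulo the lattice spanned by (N, -M) and (0, P), that is the
   abelian group <x, c | x^N = c^M, c^P = 1> written additively, x = (1, 0), c = (0, 1). *)
Section Lattice.
Variables N M P : Z.
Hypothesis N_gt0 : 0 < N.
Hypothesis P_gt0 : 0 < P.

Definition lat_nf (u : Z * Z) : Z * Z := (fst u mod N, (snd u + (fst u / N) * M) mod P).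
Definition lat_add (u v : Z * Z) : Z * Z := (fst u + fst v, snd u + snd v).
Definition lat_opp (u : Z * Z) : Z * Z := (- fst u, - snd u).
Definition lat_equiv (u v : Z * Z) : Prop :=
  exists s t, fst u = fst v + s * N /\ snd u = snd v - s * M + t * P.

Lemma lat_equiv_refl u : lat_equiv u u.
Proof. exists 0, 0. lia. Qed.
Lemma lat_equiv_sym u v : lat_equiv u v -> lat_equiv v u.
Proof. intros (s & t & H1 & H2). exists (-s), (-t). lia. Qed.
Lemma lat_equiv_trans u v w : lat_equiv u v -> lat_equiv v w -> lat_equiv u w.
Proof. intros (s & t & H1 & H2) (s' & t' & H3 & H4). exists (s + s'), (t + t'). lia. Qed.
Lemma lat_equiv_add u v u' v' :
  lat_equiv u v -> lat_equiv u' v' -> lat_equiv (lat_add u u') (lat_add v v').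
Proof.
  intros (s & t & H1 & H2) (s' & t' & H3 & H4). exists (s + s'), (t + t').
  unfold lat_add; simpl. lia.
Qed.
Lemma lat_equiv_opp u v : lat_equiv u v -> lat_equiv (lat_opp u) (lat_opp v).
Proof. intros (s & t & H1 & H2). exists (-s), (-t). unfold lat_opp; simpl. lia. Qed.
Lemma lat_equiv_nf u : lat_equiv (lat_nf u) u.
Proof.
  exists (- (fst u / N)), (- ((snd u + (fst u / N) * M) / P)). unfold lat_nf; simpl.
  pose proof (Z.div_mod (fst u) N). pose proof (Z.div_mod (snd u + fst u / N * M) P). lia.
Qed.
Lemma lat_nf_eq u v : lat_equiv u v -> lat_nf u = lat_nf v.
Proof.
  intros (s & t & H1 & H2). destruct u as [u1 u2], v as [v1 v2]; simpl in *; subst.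
  unfold lat_nf; simpl. rewrite Z.mod_add, Z.div_add by lia. f_equal.
  replace (v2 - s * M + t * P + (v1 / N + s) * M) with (v2 + v1 / N * M + t * P) by ring.
  apply Z.mod_add. lia.
Qed.
Lemma lat_equiv_of_nf u v : lat_nf u = lat_nf v -> lat_equiv u v.
Proof.
  intro E. apply lat_equiv_trans with (lat_nf u).
  - apply lat_equiv_sym, lat_equiv_nf.
  - rewrite E. apply lat_equiv_nf.
Qed.
Lemma lat_nf_idem x : lat_nf (lat_nf x) = lat_nf x.
Proof. apply lat_nf_eq, lat_equiv_nf. Qed.
Lemma lat_nf_addl x y : lat_nf (lat_add (lat_nf x) y) = lat_nf (lat_add x y).
Proof. apply lat_nf_eq, lat_equiv_add; [apply lat_equiv_nf | apply lat_equiv_refl]. Qed.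
Lemma lat_nf_addr x y : lat_nf (lat_add x (lat_nf y)) = lat_nf (lat_add x y).
Proof. apply lat_nf_eq, lat_equiv_add; [apply lat_equiv_refl | apply lat_equiv_nf]. Qed.
Lemma lat_nf_opp x : lat_nf (lat_opp (lat_nf x)) = lat_nf (lat_opp x).
Proof. apply lat_nf_eq, lat_equiv_opp, lat_equiv_nf. Qed.
Lemma lat_addA x y z : lat_add x (lat_add y z) = lat_add (lat_add x y) z.
Proof. unfold lat_add; simpl. f_equal; ring. Qed.
Lemma lat_nf_add0l x : lat_nf (lat_add (0, 0) x) = lat_nf x.
Proof. now destruct x. Qed.
Lemma lat_nf_add0r x : lat_nf (lat_add x (0, 0)) = lat_nf x.
Proof. destruct x; unfold lat_add; simpl. now rewrite !Z.add_0_r. Qed.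
Lemma lat_nf_addNl x : lat_nf (lat_add (lat_opp x) x) = lat_nf (0, 0).
Proof. unfold lat_add, lat_opp; simpl. f_equal; f_equal; ring. Qed.
Lemma lat_nf_addrN x : lat_nf (lat_add x (lat_opp x)) = lat_nf (0, 0).
Proof. unfold lat_add, lat_opp; simpl. f_equal; f_equal; ring. Qed.

Definition ZZ_eq_dec (x y : Z * Z) : {x = y} + {x <> y}.
Proof. decide equality; apply Z.eq_dec. Defined.

Definition Lat : Grp := NFGrp (Z * Z) ZZ_eq_dec lat_nf lat_add (0, 0) lat_opp lat_nf_idem
  lat_nf_addl lat_nf_addr lat_addA lat_nf_add0l lat_nf_add0r lat_nf_addNl lat_nf_addrN.

Definition lat_mk (u : Z * Z) : Lat := nf_mk (Z * Z) lat_nf lat_nf_idem u.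
Definition lat_val (w : Lat) : Z * Z := proj1_sig w.

Lemma lat_mk_mul u v : lat_mk u ** lat_mk v = lat_mk (lat_add u v).
Proof. apply nf_mk_mul; auto using lat_nf_addl, lat_nf_addr. Qed.
Lemma lat_mk_inv u : ginv (lat_mk u) = lat_mk (lat_opp u).
Proof. apply nf_mk_inv, lat_nf_opp. Qed.
Lemma lat_one : (gone : Lat) = lat_mk (0, 0).
Proof. reflexivity. Qed.
Lemma lat_mk_eq u v : lat_equiv u v -> lat_mk u = lat_mk v.
Proof. intro E. apply (nf_mk_eq _ ZZ_eq_dec), lat_nf_eq, E. Qed.
Lemma lat_mk_inj u v : lat_mk u = lat_mk v -> lat_equiv u v.
Proof. intro E. apply lat_equiv_of_nf. exact (f_equal lat_val E). Qed.
Lemma lat_mk_val (w : Lat) : lat_mk (lat_val w) = w.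
Proof. apply (nf_mk_val _ ZZ_eq_dec). Qed.
Lemma lat_val_mk u : lat_val (lat_mk u) = lat_nf u.
Proof. reflexivity. Qed.
Lemma lat_equiv_val u : lat_equiv (lat_val (lat_mk u)) u.
Proof. apply lat_equiv_nf. Qed.
Lemma lat_val_ge0 (w : Lat) : 0 <= fst (lat_val w) /\ 0 <= snd (lat_val w).
Proof.
  rewrite <- (lat_mk_val w), lat_val_mk. unfold lat_nf; simpl.
  split; apply Z.mod_pos_bound; assumption.
Qed.

Lemma lat_mulC (u v : Lat) : u ** v = v ** u.
Proof.
  rewrite <- (lat_mk_val u), <- (lat_mk_val v), !lat_mk_mul.
  f_equal. unfold lat_add. f_equal; ring.
Qed.
Lemma lat_mk_pow u k : gpow (lat_mk u) k = lat_mk (Z.of_nat k * fst u, Z.of_nat k * snd u).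
Proof.
  induction k.
  - change (gpow (lat_mk u) 0) with (gone : Lat). rewrite lat_one.
    apply lat_mk_eq. exists 0, 0. simpl. lia.
  - change (gpow (lat_mk u) (S k)) with (lat_mk u ** gpow (lat_mk u) k).
    rewrite IHk, lat_mk_mul. apply lat_mk_eq. exists 0, 0.
    unfold lat_add; cbn [fst snd]. rewrite Nat2Z.inj_succ. split; ring.
Qed.
End Lattice.

Local Close Scope Z_scope.

Section Product.
Variables A B : Grp.

Definition prod_mul (x y : A * B) : A * B := (fst x ** fst y, snd x ** snd y).
Definition prod_inv (x : A * B) : A * B := (ginv (fst x), ginv (snd x)).

Lemma prod_mulA x y z : prod_mul x (prod_mul y z) = prod_mul (prod_mul x y) z.
Proof. unfold prod_mul; simpl. now rewrite !gmulA. Qed.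
Lemma prod_mul1g x : prod_mul (gone, gone) x = x.
Proof. destruct x; unfold prod_mul; simpl. now rewrite !gmul1l. Qed.
Lemma prod_mulg1 x : prod_mul x (gone, gone) = x.
Proof. destruct x; unfold prod_mul; simpl. now rewrite !gmul1r. Qed.
Lemma prod_mulVg x : prod_mul (prod_inv x) x = (gone, gone).
Proof. destruct x; unfold prod_mul; simpl. now rewrite !gmulVl. Qed.
Lemma prod_mulgV x : prod_mul x (prod_inv x) = (gone, gone).
Proof. destruct x; unfold prod_mul; simpl. now rewrite !gmulVr. Qed.

Definition ProdGrp : Grp := {| carrier := (A * B)%type; gmul := prod_mul; gone := (gone, gone);
  ginv := prod_inv; gmulA := prod_mulA; gmul1l := prod_mul1g; gmul1r := prod_mulg1;
  gmulVl := prod_mulVg; gmulVr := prod_mulgV |}.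
End Product.

Section Semidirect.
Variable n : nat.
Hypothesis n_neq0 : n <> 0.
Variables (A : Grp) (phi : A -> A).
Hypothesis phi_hom : is_hom phi.
Hypothesis phi_period : forall w, Nat.iter n phi w = w.

Definition phi_iter (k : nat) (w : A) : A := Nat.iter k phi w.

Lemma phi_iter0 w : phi_iter 0 w = w.
Proof. reflexivity. Qed.
Lemma phi_iterD k l w : phi_iter (k + l) w = phi_iter k (phi_iter l w).
Proof. apply Nat.iter_add. Qed.
Lemma phi_iter_hom k : is_hom (phi_iter k).
Proof. induction k; intros u v; [reflexivity|]. simpl. now rewrite IHk, phi_hom. Qed.
Lemma phi_iter_mod k w : phi_iter (k mod n) w = phi_iter k w.
Proof.
  assert (Hq : forall q, phi_iter (n * q) w = w).
  { induction q; [now rewrite Nat.mul_0_r|].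
    rewrite Nat.mul_succ_r, Nat.add_comm, phi_iterD, IHq. apply phi_period. }
  rewrite (Nat.div_mod k n n_neq0) at 2. now rewrite Nat.add_comm, phi_iterD, Hq.
Qed.

Notation Cn := (Cyc n n_neq0).
Notation val := (cyc_val n n_neq0).

(* The pair (g, w) stands for the product g w, so that w g' = g' phi^g'(w). *)
Definition sd_mul (x y : Cn * A) : Cn * A :=
  (fst x ** fst y, phi_iter (val (fst y)) (snd x) ** snd y).
Definition sd_inv (x : Cn * A) : Cn * A :=
  (ginv (fst x), ginv (phi_iter (val (ginv (fst x))) (snd x))).

Lemma sd_mulA x y z : sd_mul x (sd_mul y z) = sd_mul (sd_mul x y) z.
Proof.
  destruct x as [g w], y as [g' w'], z as [g'' w'']; unfold sd_mul; cbn [fst snd].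
  f_equal; [apply gmulA|].
  rewrite cyc_val_mul, phi_iter_mod, (phi_iter_hom _ _ w'), <- phi_iterD, Nat.add_comm.
  apply gmulA.
Qed.
Lemma sd_mul1g x : sd_mul (gone, gone) x = x.
Proof.
  destruct x as [g w]; unfold sd_mul; cbn [fst snd].
  rewrite (hom1 _ (phi_iter_hom _)). f_equal; apply gmul1l.
Qed.
Lemma sd_mulg1 x : sd_mul x (gone, gone) = x.
Proof.
  destruct x as [g w]; unfold sd_mul; cbn [fst snd]. rewrite cyc_val1. f_equal; apply gmul1r.
Qed.
Lemma sd_mulVg x : sd_mul (sd_inv x) x = (gone, gone).
Proof.
  destruct x as [g w]; unfold sd_mul, sd_inv; cbn [fst snd]. f_equal; [apply gmulVl|].
  rewrite (homV _ (phi_iter_hom _)), <- phi_iterD, <- phi_iter_mod, <- cyc_val_mul,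
    gmulVr, cyc_val1.
  apply gmulVl.
Qed.
Lemma sd_mulgV x : sd_mul x (sd_inv x) = (gone, gone).
Proof. destruct x as [g w]; unfold sd_mul, sd_inv; cbn [fst snd]. f_equal; apply gmulVr. Qed.

Definition Sdprod : Grp := {| carrier := (Cn * A)%type; gmul := sd_mul; gone := (gone, gone);
  ginv := sd_inv; gmulA := sd_mulA; gmul1l := sd_mul1g; gmul1r := sd_mulg1;
  gmulVl := sd_mulVg; gmulVr := sd_mulgV |}.

Lemma sd_mulE (g g' : Cn) (w w' : A) :
  @gmul Sdprod (g, w) (g', w') = (g ** g', phi_iter (val g') w ** w').
Proof. reflexivity. Qed.

Definition sd_inl (g : Cn) : Sdprod := (g, gone).
Definition sd_inr (u : A) : Sdprod := (gone, u).

Lemma sd_inl_hom : is_hom sd_inl.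
Proof. intros u v. unfold sd_inl. now rewrite sd_mulE, (hom1 _ (phi_iter_hom _)), gmul1l. Qed.
Lemma sd_inr_hom : is_hom sd_inr.
Proof. intros u v. unfold sd_inr. now rewrite sd_mulE, cyc_val1, phi_iter0, gmul1l. Qed.
Lemma sd_mul_inl_inr (g : Cn) (v : A) : @gmul Sdprod (sd_inl g) (sd_inr v) = (g, v).
Proof. unfold sd_inl, sd_inr. now rewrite sd_mulE, cyc_val1, phi_iter0, gmul1l, gmul1r. Qed.
Lemma sd_comm_inr_inl (u : A) (g : Cn) :
  comm (sd_inr u) (sd_inl g) = sd_inr (ginv u ** phi_iter (val g) u).
Proof.
  apply comm_of_mul_eq. unfold sd_inr, sd_inl.
  rewrite !sd_mulE, cyc_val1, phi_iter0, (hom1 _ (phi_iter_hom _)), !gmul1l, !gmul1r.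
  now rewrite mulKVg.
Qed.
End Semidirect.

Section SemidirectMap.
Variable n : nat.
Hypothesis n_neq0 : n <> 0.
Variables (A A' : Grp) (phi : A -> A) (phi' : A' -> A').
Hypothesis phi_hom : is_hom phi.
Hypothesis phi_period : forall w, Nat.iter n phi w = w.
Hypothesis phi'_hom : is_hom phi'.
Hypothesis phi'_period : forall w, Nat.iter n phi' w = w.
Variable rho : A -> A'.
Hypothesis rho_hom : is_hom rho.
Hypothesis rho_phi : forall w, rho (phi w) = phi' (rho w).

Definition sd_map (x : Sdprod n n_neq0 A phi phi_hom phi_period) :
  Sdprod n n_neq0 A' phi' phi'_hom phi'_period := (fst x, rho (snd x)).

Lemma sd_map_hom : is_hom sd_map.
Proof.
  assert (Hiter : forall k w, rho (phi_iter A phi k w) = phi_iter A' phi' k (rho w)).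
  { induction k; intro w; [reflexivity|]. simpl. now rewrite rho_phi, <- IHk. }
  intros [g w] [g' w']. unfold sd_map. rewrite !sd_mulE. cbn [fst snd].
  now rewrite rho_hom, Hiter.
Qed.
End SemidirectMap.

(** * Necessity *)

Lemma pow2_neq0 k : 2 ^ k <> 0.
Proof. apply Nat.pow_nonzero. lia. Qed.
Lemma pow2_mul e1 e2 e : e1 + e2 = e -> 2 ^ e1 * 2 ^ e2 = 2 ^ e.
Proof. intros <-. symmetry. apply Nat.pow_add_r. Qed.
Lemma pow2_dvd e1 e2 : e1 <= e2 -> Nat.divide (2 ^ e1) (2 ^ e2).
Proof. intro H. exists (2 ^ (e2 - e1)). symmetry. apply pow2_mul. lia. Qed.
Lemma choose2_pow2 e : 1 <= e -> choose2 (2 ^ e) = 2 ^ (e - 1) * (2 ^ e - 1).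
Proof.
  intro He. apply (Nat.mul_cancel_l _ _ 2); [lia|]. rewrite double_choose2.
  rewrite <- (pow2_mul 1 (e - 1) e) at 1 by lia. now rewrite <- Nat.mul_assoc.
Qed.
Lemma pow2_dvd_choose2 e1 e2 : e1 < e2 -> Nat.divide (2 ^ e1) (choose2 (2 ^ e2)).
Proof.
  intro H. rewrite choose2_pow2 by lia. apply Nat.divide_mul_l, pow2_dvd. lia.
Qed.

Section CapableNecessary.
Variables al be ga si : nat.
Hypothesis si_lt_ga : si < ga.
Hypothesis ga2_le : 2 * ga <= al + si.
Hypothesis ga_lt_be : ga < be.
Variables (G : Grp) (a b : G).
Let c := comm a b.
Hypothesis ab_rels : rels al be ga si a b.
Hypothesis ab_generate : forall g : G, exists j i k, g = gpow b j ** gpow a i ** gpow c k.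
Hypothesis b_half_neq1 : gpow b (2 ^ (be - 1)) <> gone.
Hypothesis c_half_neq1 : gpow c (2 ^ (ga - 1)) <> gone.

Lemma rels_c_pow : gpow c (2 ^ ga) = gone.
Proof.
  destruct ab_rels as (a_ord & _ & _ & _ & a_N).
  rewrite <- (pow2_mul si (ga - si) ga), gpowM by lia. unfold c.
  rewrite <- a_N, <- gpowM, (pow2_mul _ _ al) by lia. exact a_ord.
Qed.

Section Lift.
Variables (K : Grp) (f : K -> G).
Hypothesis f_hom : is_hom f.
Hypothesis f_ker : forall k, f k = gone <-> central k.
Variables x y : K.
Hypothesis f_x : f x = a.
Hypothesis f_y : f y = b.
Let z := comm x y.
Let t := comm z x.
Let s := comm z y.

Lemma f_z : f z = c.
Proof. unfold z. now rewrite (homR _ f_hom), f_x, f_y. Qed.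

Lemma comm_lift_eq v w g : f v = f w -> comm v g = comm w g.
Proof.
  intro E. assert (Hk : central (ginv w ** v)).
  { apply f_ker. now rewrite f_hom, (homV _ f_hom), E, gmulVl. }
  now rewrite <- (mulKVg w v), commMg_central.
Qed.

Lemma t_central : central t.
Proof.
  apply f_ker. unfold t. rewrite (homR _ f_hom), f_z, f_x. apply ab_rels.
Qed.
Lemma s_central : central s.
Proof.
  apply f_ker. unfold s. rewrite (homR _ f_hom), f_z, f_y. apply ab_rels.
Qed.

(* Every element of K is a word in x, y times an element of ker f = Z(K). *)
Lemma central_of_commute w : commute w x -> commute w y -> central w.
Proof.
  intros wx wy g. destruct (ab_generate (f g)) as (j & i & k & E).
  set (q := gpow y j ** gpow x i ** gpow z k).
  assert (Hk : central (ginv q ** g)).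
  { apply f_ker. unfold q. rewrite f_hom, (homV _ f_hom), !f_hom, !(homX _ f_hom), f_x, f_y, f_z.
    rewrite <- E. apply gmulVl. }
  assert (wz : commute w z).
  { unfold z, comm. repeat apply commuteM; auto using commuteV. }
  rewrite <- (mulKVg q g). apply commuteM.
  - unfold q. repeat apply commuteM; apply commuteX; assumption.
  - apply commute_sym, Hk.
Qed.

Lemma b_pow_eq1 k : comm x (gpow y k) = gone -> gpow b k = gone.
Proof.
  intro E. rewrite <- f_y, <- (homX _ f_hom). apply f_ker, central_of_commute.
  - apply commute_sym, comm_eq1, E.
  - apply commute_sym, commuteX, commute_refl.
Qed.

Lemma t_pow_M : gpow t (2 ^ si) = gone.
Proof.
  destruct ab_rels as (_ & _ & _ & _ & a_N).
  rewrite <- (commXg_of_central z x) by exact t_central.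
  rewrite (comm_lift_eq _ (gpow x (2 ^ (al + si - ga)))).
  - apply comm_eq1, commute_sym, commuteX, commute_refl.
  - rewrite !(homX _ f_hom), f_x, f_z. now symmetry.
Qed.

Lemma z_pow_N : gpow z (2 ^ (al + si - ga)) = gpow s (2 ^ si).
Proof.
  destruct ab_rels as (_ & _ & _ & _ & a_N).
  rewrite <- (commXg_of_central z y) by exact s_central.
  rewrite (comm_lift_eq _ (gpow x (2 ^ (al + si - ga)))).
  - rewrite (commXg_class3 x y t_central). fold z t.
    rewrite (gpow_eq1_dvd t (2 ^ si)), gmul1r; [reflexivity | exact t_pow_M |].
    apply pow2_dvd_choose2. lia.
  - rewrite !(homX _ f_hom), f_x, f_z. now symmetry.
Qed.

Lemma s_pow_P : gpow s (2 ^ ga) = gone.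
Proof.
  rewrite <- (commXg_of_central z y) by exact s_central.
  apply comm_eq1, f_ker. rewrite (homX _ f_hom), f_z. exact rels_c_pow.
Qed.

Lemma s_half_neq1 : gpow s (2 ^ (ga - 1)) <> gone.
Proof.
  intro E. apply c_half_neq1. rewrite <- f_z, <- (homX _ f_hom). apply f_ker, central_of_commute.
  - apply comm_eq1. rewrite (commXg_of_central z x) by exact t_central.
    apply (gpow_eq1_dvd t (2 ^ si)); [exact t_pow_M | apply pow2_dvd; lia].
  - apply comm_eq1. now rewrite (commXg_of_central z y) by exact s_central.
Qed.

Lemma z_pow_half : gpow z (2 ^ (al - 1)) = gpow s (2 ^ (ga - 1)).
Proof.
  rewrite <- (pow2_mul (al + si - ga) (ga - si - 1) (al - 1)),
    <- (pow2_mul si (ga - si - 1) (ga - 1)), !gpowM by lia.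
  now rewrite z_pow_N.
Qed.

Lemma z_pow_al : gpow z (2 ^ al) = gone.
Proof.
  rewrite <- (pow2_mul (al + si - ga) (ga - si) al), gpowM, z_pow_N, <- gpowM by lia.
  rewrite (pow2_mul _ _ ga) by lia. exact s_pow_P.
Qed.

Lemma al_ge_be : be <= al.
Proof.
  apply Nat.nlt_ge. intro Hlt. apply b_half_neq1.
  apply (gpow_eq1_dvd b (2 ^ al)); [|apply pow2_dvd; lia].
  apply b_pow_eq1. rewrite (commgX_class3 x y s_central). fold z s.
  rewrite z_pow_al, gmul1l. apply (gpow_eq1_dvd s (2 ^ ga)); [exact s_pow_P|].
  apply pow2_dvd_choose2. lia.
Qed.

Lemma al_le_be : al <= be.
Proof.
  apply Nat.nlt_ge. intro Hlt. apply s_half_neq1. rewrite <- z_pow_half.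
  apply (gpow_eq1_dvd z (2 ^ be)); [|apply pow2_dvd; lia].
  assert (E : comm x (gpow y (2 ^ be)) = gone).
  { apply comm_eq1, commute_sym, f_ker. rewrite (homX _ f_hom), f_y. apply ab_rels. }
  rewrite (commgX_class3 x y s_central) in E. fold z s in E.
  rewrite (gpow_eq1_dvd s (2 ^ ga) (choose2 (2 ^ be))), gmul1r in E;
    [exact E | exact s_pow_P | apply pow2_dvd_choose2; lia].
Qed.

(* When al = be = ga + 1, the half powers of z and s cancel in [x, y^(2^ga)]. *)
Lemma ga_neq_pred_be : al = be -> ga <> be - 1.
Proof.
  intros Hab Hga. apply b_half_neq1. rewrite <- Hga. apply b_pow_eq1.
  rewrite (commgX_class3 x y s_central). fold z s.
  replace (2 ^ ga) with (2 ^ (al - 1)) at 1 by (f_equal; lia).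
  rewrite z_pow_half, <- gpowD. apply (gpow_eq1_dvd s (2 ^ ga)); [exact s_pow_P|].
  rewrite choose2_pow2 by lia. exists (2 ^ (ga - 1)).
  pose proof (pow2_neq0 ga). destruct (2 ^ ga) as [|P']; [lia|]. nia.
Qed.
End Lift.

Lemma capable_necessary : capable G -> al = be /\ ga < be - 1.
Proof.
  intros (K & f & f_hom & f_surj & f_ker).
  destruct (f_surj a) as [x f_x], (f_surj b) as [y f_y].
  pose proof (al_ge_be K f f_hom f_ker x y f_x f_y).
  pose proof (al_le_be K f f_hom f_ker x y f_x f_y).
  pose proof (ga_neq_pred_be K f f_hom f_ker x y f_x f_y).
  lia.
Qed.
End CapableNecessary.

(** * The model Q of the presented group *)

Definition zpow2 (e : nat) : Z := Z.of_nat (2 ^ e).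

Lemma zpow2_gt0 e : (0 < zpow2 e)%Z.
Proof. pose proof (pow2_neq0 e). unfold zpow2. lia. Qed.
Lemma zpow2_mul e1 e2 e : e1 + e2 = e -> (zpow2 e1 * zpow2 e2)%Z = zpow2 e.
Proof. intro E. unfold zpow2. now rewrite <- Nat2Z.inj_mul, (pow2_mul _ _ e). Qed.

Lemma zpow2_dvd_odd e s u : Z.odd u = true -> (zpow2 e | s * u)%Z -> (zpow2 e | s)%Z.
Proof.
  intros u_odd Hd. apply (Znumtheory.Gauss _ u); [now rewrite Z.mul_comm|].
  unfold zpow2. rewrite Nat2Z.inj_pow.
  apply Znumtheory.rel_prime_sym, Zpow_facts.rel_prime_Zpower_r; [lia|].
  apply Znumtheory.rel_prime_sym, Znumtheory.prime_rel_prime; [exact Znumtheory.prime_2|].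
  intros [k ->]. now rewrite Z.odd_mul, Bool.andb_false_r in u_odd.
Qed.

Lemma double_choose2_Z g : (2 * Z.of_nat (choose2 g) = Z.of_nat g * (Z.of_nat g - 1))%Z.
Proof.
  destruct g; [reflexivity|].
  rewrite <- (Nat2Z.inj_mul 2), double_choose2, Nat2Z.inj_mul, Nat2Z.inj_sub by lia. reflexivity.
Qed.

Section ModelQ.
Variables al be ga si : nat.
Hypothesis si_lt_ga : si < ga.
Hypothesis ga2_le : 2 * ga <= al + si.
Hypothesis ga_lt_be : ga < be.

Notation N := (zpow2 (al + si - ga)).
Notation M := (zpow2 si).
Notation P := (zpow2 ga).
Notation L := (Lat N M P (zpow2_gt0 _) (zpow2_gt0 _)).

Definition lmk (u : Z * Z) : L := lat_mk N M P (zpow2_gt0 _) (zpow2_gt0 _) u.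
Definition lval (w : L) : Z * Z := lat_val N M P (zpow2_gt0 _) (zpow2_gt0 _) w.

Lemma lmk_lval w : lmk (lval w) = w.
Proof. apply lat_mk_val. Qed.
Lemma lmk_mul u v : lmk u ** lmk v = lmk (lat_add u v).
Proof. apply lat_mk_mul. Qed.
Lemma lmk_eq u v : lat_equiv N M P u v -> lmk u = lmk v.
Proof. apply lat_mk_eq. Qed.
Lemma lmk_inj u v : lmk u = lmk v -> lat_equiv N M P u v.
Proof. apply lat_mk_inj. Qed.
Lemma lmk_pow u k : gpow (lmk u) k = lmk (Z.of_nat k * fst u, Z.of_nat k * snd u)%Z.
Proof. apply lat_mk_pow. Qed.
Lemma lval_lmk u : lat_equiv N M P (lval (lmk u)) u.
Proof. apply lat_equiv_val. Qed.
Lemma lval_nat w : exists i k, lval w = (Z.of_nat i, Z.of_nat k).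
Proof.
  destruct (lat_val_ge0 _ _ _ _ _ w) as [H1 H2].
  exists (Z.to_nat (fst (lval w))), (Z.to_nat (snd (lval w))).
  rewrite !Z2Nat.id by assumption. now destruct (lval w).
Qed.

(* The automorphism x -> x c, c -> c of L; it is well defined because P divides N. *)
Definition shear (w : L) : L := lmk (fst (lval w), snd (lval w) + fst (lval w))%Z.

Lemma shear_lq u : shear (lmk u) = lmk (fst u, snd u + fst u)%Z.
Proof.
  unfold shear. apply lmk_eq.
  destruct (lval_lmk u) as (s & t & H1 & H2).
  exists s, (t + s * zpow2 (al + si - 2 * ga))%Z. cbn [fst snd] in *.
  rewrite <- (zpow2_mul (al + si - 2 * ga) ga (al + si - ga)) in * by lia. lia.
Qed.
Lemma shear_hom : is_hom shear.
Proof.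
  intros w w'. rewrite <- (lmk_lval w), <- (lmk_lval w'), lmk_mul, !shear_lq, lmk_mul.
  f_equal. unfold lat_add; simpl. f_equal. ring.
Qed.
Lemma shear_iter k u : phi_iter L shear k (lmk u) = lmk (fst u, snd u + Z.of_nat k * fst u)%Z.
Proof.
  induction k; simpl phi_iter.
  - f_equal. destruct u; simpl. f_equal. ring.
  - rewrite IHk, shear_lq. cbn [fst snd]. f_equal. f_equal. lia.
Qed.
Lemma shear_period w : Nat.iter (2 ^ be) shear w = w.
Proof.
  rewrite <- (lmk_lval w).
  change (Nat.iter _ shear _) with (phi_iter L shear (2 ^ be) (lmk (lval w))).
  rewrite shear_iter. apply lmk_eq. destruct (lval w) as [p q]; simpl.
  exists 0%Z, (zpow2 (be - ga) * p)%Z. change (Z.of_nat (2 ^ be)) with (zpow2 be).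
  rewrite <- (zpow2_mul (be - ga) ga be) by lia. simpl. lia.
Qed.

Notation Q := (Sdprod (2 ^ be) (pow2_neq0 be) L shear shear_hom shear_period).
Notation Cb := (Cyc (2 ^ be) (pow2_neq0 be)).
Notation yval := (cyc_val (2 ^ be) (pow2_neq0 be)).

Definition qcyc (g : Cb) : Q := sd_inl (2 ^ be) (pow2_neq0 be) L shear shear_hom shear_period g.
Definition qlat (w : L) : Q := sd_inr (2 ^ be) (pow2_neq0 be) L shear shear_hom shear_period w.
Definition cyc1 : Cb := cyc_mk (2 ^ be) (pow2_neq0 be) 1.
Definition xQ : Q := qlat (lmk (1, 0)%Z).
Definition cQ : Q := qlat (lmk (0, 1)%Z).
Definition yQ : Q := qcyc cyc1.

Lemma qcyc_hom : is_hom qcyc.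
Proof. apply sd_inl_hom. Qed.
Lemma qlat_hom : is_hom qlat.
Proof. apply sd_inr_hom. Qed.

Lemma yval_cyc1 : yval cyc1 = 1.
Proof.
  unfold cyc1. rewrite cyc_val_mk. apply Nat.mod_small.
  apply (Nat.pow_lt_mono_r 2 0 be); lia.
Qed.

Lemma comm_qlat_yQ u : comm (qlat (lmk u)) yQ = qlat (lmk (0, fst u)%Z).
Proof.
  unfold qlat, yQ, qcyc. rewrite sd_comm_inr_inl, yval_cyc1.
  change (phi_iter L shear 1 (lmk u)) with (shear (lmk u)).
  rewrite shear_lq, lat_mk_inv, lmk_mul. f_equal. apply lmk_eq.
  exists 0%Z, 0%Z. destruct u. simpl. lia.
Qed.

Lemma Q_comm_xy : comm xQ yQ = cQ.
Proof. apply comm_qlat_yQ. Qed.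

Lemma Q_rels : rels al be ga si xQ yQ.
Proof.
  unfold rels. rewrite Q_comm_xy. repeat split.
  - unfold xQ. rewrite <- (homX _ qlat_hom), lmk_pow, <- (hom1 _ qlat_hom). f_equal.
    apply lmk_eq. exists (zpow2 (ga - si)), 1%Z. change (Z.of_nat (2 ^ al)) with (zpow2 al).
    rewrite <- (zpow2_mul (ga - si) (al + si - ga) al), <- (zpow2_mul (ga - si) si ga) by lia.
    cbn [fst snd]. lia.
  - unfold yQ, cyc1. rewrite <- (homX _ qcyc_hom), cyc_mk_pow, <- (hom1 _ qcyc_hom). f_equal.
    apply cyc_val_inj. now rewrite cyc_val_mk, cyc_val1, Nat.mul_1_r, Nat.Div0.mod_same.
  - unfold cQ, xQ. rewrite <- (homR _ qlat_hom), <- (hom1 _ qlat_hom). f_equal.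
    apply comm_eq1, lat_mulC.
  - unfold cQ. rewrite comm_qlat_yQ, <- (hom1 _ qlat_hom). reflexivity.
  - unfold xQ, cQ. rewrite <- !(homX _ qlat_hom), !lmk_pow. f_equal.
    apply lmk_eq. exists 1%Z, 0%Z. cbn [fst snd]. unfold zpow2. lia.
Qed.

Lemma yQ_half_neq1 : gpow yQ (2 ^ (be - 1)) <> gone.
Proof.
  intro E. unfold yQ, cyc1 in E.
  rewrite <- (homX _ qcyc_hom), cyc_mk_pow, <- (hom1 _ qcyc_hom) in E.
  apply (f_equal (fun q : Q => yval (fst q))) in E. unfold qcyc, sd_inl in E. cbn [fst] in E.
  rewrite cyc_val_mk, cyc_val1, Nat.mul_1_r, Nat.mod_small in E.
  - exact (pow2_neq0 _ E).
  - apply Nat.pow_lt_mono_r; lia.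
Qed.

Lemma cQ_half_neq1 : gpow (comm xQ yQ) (2 ^ (ga - 1)) <> gone.
Proof.
  rewrite Q_comm_xy. intro E. unfold cQ in E.
  rewrite <- (homX _ qlat_hom), lmk_pow, <- (hom1 _ qlat_hom) in E.
  apply (f_equal snd) in E. unfold qlat, sd_inr in E. cbn [snd] in E.
  apply (lmk_inj _ (0, 0)%Z) in E. destruct E as (s & t & H1 & H2). cbn [fst snd] in H1, H2.
  pose proof (zpow2_gt0 (al + si - ga)). assert (s = 0)%Z by nia. subst s.
  rewrite <- (zpow2_mul 1 (ga - 1) ga) in H2 by lia.
  change (zpow2 1) with 2%Z in H2. pose proof (zpow2_gt0 (ga - 1)). unfold zpow2 in *.
  assert (E : (Z.of_nat (2 ^ (ga - 1)) * (1 - 2 * t) = 0)%Z) by lia.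
  apply Z.mul_eq_0 in E. lia.
Qed.

Definition word {H : Grp} (x y : H) (q : Q) : H :=
  gpow y (yval (fst q)) ** gpow x (Z.to_nat (fst (lval (snd q))))
    ** gpow (comm x y) (Z.to_nat (snd (lval (snd q)))).

Lemma hom_word (H H' : Grp) (f : H -> H') (x y : H) q :
  is_hom f -> f (word x y q) = word (f x) (f y) q.
Proof. intro f_hom. unfold word. now rewrite !f_hom, !(homX _ f_hom), (homR _ f_hom). Qed.

Lemma Q_word q : word xQ yQ q = q.
Proof.
  destruct q as [g w]. destruct (lval_nat w) as (i & k & Hw).
  unfold word. cbn [fst snd]. rewrite Hw, Q_comm_xy. cbn [fst snd]. rewrite !Nat2Z.id.
  unfold yQ, xQ, cQ, cyc1.
  rewrite <- gmulA, <- !(homX _ qlat_hom), <- qlat_hom, <- (homX _ qcyc_hom), !lmk_pow, lmk_mul.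
  unfold qcyc, qlat. rewrite sd_mul_inl_inr, cyc_mk_pow, Nat.mul_1_r. f_equal.
  - apply cyc_val_inj. rewrite cyc_val_mk. apply Nat.mod_small, cyc_val_lt.
  - rewrite <- (lmk_lval w), Hw. apply lmk_eq. exists 0%Z, 0%Z. simpl. lia.
Qed.

Lemma Q_normal_form (q : Q) : exists j i k, q = gpow yQ j ** gpow xQ i ** gpow (comm xQ yQ) k.
Proof. eexists _, _, _. symmetry. exact (Q_word q). Qed.

Section WordMap.
Variables (G : Grp) (a b : G).
Hypothesis ab_rels : rels al be ga si a b.
Local Notation c := (comm a b).

Lemma word_reduce x y :
  gpow a (x mod 2 ^ (al + si - ga)) ** gpow c ((y + x / 2 ^ (al + si - ga) * 2 ^ si) mod 2 ^ ga)
  = gpow a x ** gpow c y.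
Proof.
  destruct ab_rels as (_ & _ & c_a & _ & a_N).
  rewrite <- (gpow_modn c (2 ^ ga)) by (apply pow2_neq0 || apply (rels_c_pow al be ga si); auto).
  rewrite (Nat.div_mod x (2 ^ (al + si - ga))) at 3 by apply pow2_neq0.
  rewrite (gpowD a), (gpowM a), a_N, <- gpowM, (Nat.add_comm y), gpowD, (Nat.mul_comm (2 ^ si)).
  rewrite gmulA, (commuteXX _ _ _ (x mod _) (proj1 (comm_eq1 _ _) c_a)). reflexivity.
Qed.

Lemma word_lq i k :
  gpow a (Z.to_nat (fst (lval (lmk (Z.of_nat i, Z.of_nat k)))))
    ** gpow c (Z.to_nat (snd (lval (lmk (Z.of_nat i, Z.of_nat k))))) = gpow a i ** gpow c k.
Proof.
  unfold lval, lmk. rewrite lat_val_mk. unfold lat_nf, zpow2. cbn [fst snd].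
  rewrite <- Nat2Z.inj_mod, <- Nat2Z.inj_div, <- Nat2Z.inj_mul, <- Nat2Z.inj_add,
    <- Nat2Z.inj_mod, !Nat2Z.id.
  apply word_reduce.
Qed.

Lemma word_hom : is_hom (word a b).
Proof.
  destruct ab_rels as (_ & b_ord & c_a & c_b & _).
  apply comm_eq1 in c_a, c_b.
  intros [g w] [g' w'].
  destruct (lval_nat w) as (i & k & Hw), (lval_nat w') as (i' & k' & Hw').
  assert (E : phi_iter L shear (yval g') w ** w' =
              lmk (Z.of_nat (i + i'), Z.of_nat (k + yval g' * i + k'))).
  { rewrite <- (lmk_lval w), <- (lmk_lval w'), Hw, Hw', shear_iter, lmk_mul. apply lmk_eq.
    exists 0%Z, 0%Z. unfold lat_add; cbn [fst snd]. lia. }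
  unfold word. rewrite sd_mulE. cbn [fst snd].
  rewrite E, <- (gmulA (gpow b _) (gpow a _) (gpow c _)).
  rewrite word_lq, Hw, Hw'. cbn [fst snd]. rewrite !Nat2Z.id.
  rewrite (mul_normal_form a b c_a c_b), cyc_val_mul, <- gpow_modn
    by (apply pow2_neq0 || exact b_ord).
  rewrite gmulA. do 2 f_equal. lia.
Qed.

Lemma word_xQ : word a b xQ = a.
Proof.
  unfold word, xQ, qlat, sd_inr. cbn [fst snd]. rewrite cyc_val1.
  change (lmk (1, 0)%Z) with (lmk (Z.of_nat 1, Z.of_nat 0)).
  rewrite <- gmulA. rewrite word_lq. simpl. now rewrite !gmul1l, !gmul1r.
Qed.
Lemma word_yQ : word a b yQ = b.
Proof.
  unfold word, yQ, qcyc, sd_inl. cbn [fst snd]. rewrite yval_cyc1.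
  change (gone : L) with (lmk (Z.of_nat 0, Z.of_nat 0)).
  rewrite <- gmulA. rewrite word_lq. simpl. now rewrite !gmul1l, !gmul1r.
Qed.
End WordMap.

Lemma capable_iso (H H' : Grp) (f : H -> H') (g : H' -> H) :
  is_hom f -> (forall u, g (f u) = u) -> (forall v, f (g v) = v) -> capable H -> capable H'.
Proof.
  intros f_hom gK fK (K & p & p_hom & p_surj & p_ker).
  exists K, (fun k => f (p k)). split; [|split].
  - intros u v. now rewrite p_hom, f_hom.
  - intro v. destruct (p_surj (g v)) as [k Hk]. exists k. now rewrite Hk, fK.
  - intro k. rewrite <- p_ker. split; intro E.
    + now rewrite <- (gK (p k)), E, <- (hom1 _ f_hom), gK.
    + now rewrite E, (hom1 _ f_hom).
Qed.

Lemma presented_capable_iff (G : Grp) (a b : G) :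
  presents al be ga si G a b -> (capable G <-> capable Q).
Proof.
  intros [ab_rels ab_univ].
  destruct (ab_univ Q xQ yQ Q_rels) as (h & h_hom & h_a & h_b & _).
  destruct (ab_univ G a b ab_rels) as (f0 & _ & _ & _ & uniq).
  assert (wordK : forall g, word a b (h g) = g).
  { intro g. rewrite (uniq (fun g => word a b (h g))), (uniq (fun g => g)); auto.
    - now intros u v.
    - intros u v. now rewrite h_hom, (word_hom G a b ab_rels).
    - now rewrite h_a, word_xQ.
    - now rewrite h_b, word_yQ. }
  assert (hK : forall q, h (word a b q) = q).
  { intro q. now rewrite (hom_word _ _ h), h_a, h_b, Q_word. }
  split; intro Hcap.
  - exact (capable_iso G Q h (word a b) h_hom wordK hK Hcap).
  - exact (capable_iso Q G (word a b) h (word_hom G a b ab_rels) hK wordK Hcap).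
Qed.

(** * Sufficiency *)

Lemma lat_equiv_mod p p' q q' k1 k2 k3 :
  p = (p' + zpow2 al * k1)%Z -> q = (q' + N * k2 + P * k3)%Z -> lat_equiv N M P (p, q) (p', q').
Proof.
  intros H1 H2. exists (zpow2 (ga - si) * k1)%Z, (k1 + k2 * zpow2 (al + si - 2 * ga) + k3)%Z.
  cbn [fst snd].
  rewrite <- (zpow2_mul (ga - si) (al + si - ga) al) in H1 by lia.
  rewrite <- (zpow2_mul (al + si - 2 * ga) ga (al + si - ga)) in * by lia.
  rewrite <- (zpow2_mul (ga - si) si ga) in * by lia.
  lia.
Qed.

Section Sufficiency.
Hypothesis al_eq_be : al = be.
Hypothesis ga_lt_pred_be : ga < be - 1.

Notation Ca := (Cyc (2 ^ al) (pow2_neq0 al)).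
Notation A := (ProdGrp Ca L).
Definition zval (i : Ca) : Z := Z.of_nat (cyc_val _ _ i).

Lemma zval_mul i i' : exists k, zval (i ** i') = (zval i + zval i' + zpow2 al * k)%Z.
Proof.
  exists (- Z.of_nat ((cyc_val _ _ i + cyc_val _ _ i') / 2 ^ al))%Z.
  unfold zval, zpow2. rewrite cyc_val_mul.
  pose proof (Nat.div_mod (cyc_val _ _ i + cyc_val _ _ i') (2 ^ al) (pow2_neq0 al)). lia.
Qed.

(* The automorphism u -> u x, x -> x c, c -> c of A, where u generates the factor Ca. *)
Definition twist (w : A) : A := (fst w, shear (snd w) ** lmk (zval (fst w), 0)%Z).

Lemma twist_lq i u : twist (i, lmk u) = (i, lmk (fst u + zval i, snd u + fst u)%Z).
Proof.
  unfold twist. cbn [fst snd]. rewrite shear_lq, lmk_mul. f_equal.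
  apply lmk_eq. exists 0%Z, 0%Z. cbn [fst snd lat_add]. lia.
Qed.

Lemma twist_hom : is_hom twist.
Proof.
  intros [i w] [i' w']. rewrite <- (lmk_lval w), <- (lmk_lval w').
  change (@gmul A (i, ?u) (i', ?v)) with (i ** i', u ** v).
  rewrite lmk_mul, !twist_lq. change (@gmul A (?j, ?u) (?j', ?v)) with (j ** j', u ** v).
  rewrite lmk_mul. f_equal. apply lmk_eq. unfold lat_add. cbn [fst snd].
  destruct (zval_mul i i') as [k ->]. apply (lat_equiv_mod _ _ _ _ k 0 0); lia.
Qed.

Lemma twist_iter k i u : phi_iter A twist k (i, lmk u) =
  (i, lmk (fst u + Z.of_nat k * zval i,
          snd u + Z.of_nat k * fst u + Z.of_nat (choose2 k) * zval i)%Z).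
Proof.
  induction k.
  - rewrite phi_iter0. f_equal. apply lmk_eq. exists 0%Z, 0%Z. cbn [fst snd choose2]. lia.
  - change (phi_iter A twist (S k) ?w) with (twist (phi_iter A twist k w)).
    rewrite IHk, twist_lq. f_equal. apply lmk_eq. exists 0%Z, 0%Z. cbn [fst snd choose2]. lia.
Qed.

Lemma twist_period w : Nat.iter (2 ^ be) twist w = w.
Proof.
  destruct w as [i w]. rewrite <- (lmk_lval w).
  change (Nat.iter _ twist _) with (phi_iter A twist (2 ^ be) (i, lmk (lval w))).
  rewrite twist_iter. f_equal. apply lmk_eq. destruct (lval w) as [p q]. cbn [fst snd].
  assert (Hc : Z.of_nat (choose2 (2 ^ be)) = (Z.of_nat (2 ^ (be - 1 - ga) * (2 ^ be - 1)) * P)%Z).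
  { rewrite choose2_pow2 by lia. unfold zpow2. rewrite <- Nat2Z.inj_mul, <- Nat.mul_assoc,
      (Nat.mul_comm (2 ^ be - 1)), Nat.mul_assoc, (pow2_mul _ _ (be - 1)) by lia.
    reflexivity. }
  apply (lat_equiv_mod _ _ _ _ (zval i) 0
    (zpow2 (be - ga) * p + Z.of_nat (2 ^ (be - 1 - ga) * (2 ^ be - 1)) * zval i)%Z).
  - replace (zpow2 al) with (zpow2 be) by now rewrite al_eq_be. reflexivity.
  - rewrite Hc. change (Z.of_nat (2 ^ be)) with (zpow2 be).
    rewrite <- (zpow2_mul (be - ga) ga be) by lia. ring.
Qed.

Notation K := (Sdprod (2 ^ be) (pow2_neq0 be) A twist twist_hom twist_period).

(* The projection A -> L sending u, x, c to x, c, 1. *)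
Definition drop (w : A) : L := lmk (zval (fst w), fst (lval (snd w))).

Lemma drop_hom : is_hom drop.
Proof.
  intros [i w] [i' w']. rewrite <- (lmk_lval w), <- (lmk_lval w').
  change (@gmul A (i, ?u) (i', ?v)) with (i ** i', u ** v). unfold drop. cbn [fst snd].
  rewrite !lmk_mul, !lmk_lval. apply lmk_eq.
  destruct (zval_mul i i') as [k ->].
  destruct (lval_lmk (lat_add (lval w) (lval w'))) as (s & t & H1 & _).
  unfold lat_add in *. cbn [fst snd] in *.
  apply (lat_equiv_mod _ _ _ _ k s 0); lia.
Qed.

Lemma drop_twist w : drop (twist w) = shear (drop w).
Proof.
  destruct w as [i w]. rewrite <- (lmk_lval w), twist_lq. unfold drop. cbn [fst snd].
  rewrite shear_lq. apply lmk_eq. cbn [fst snd].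
  destruct (lval_lmk (fst (lval w) + zval i, snd (lval w) + fst (lval w))%Z) as (s & t & H1 & _).
  destruct (lval_lmk (lval w)) as (s' & t' & H1' & _). rewrite lmk_lval in *. cbn [fst snd] in *.
  apply (lat_equiv_mod _ _ _ _ 0 (s - s') 0); lia.
Qed.

Lemma drop_lq_equiv i u :
  drop (i, lmk u) = gone <-> lat_equiv N M P (zval i, fst u) (0, 0)%Z.
Proof.
  unfold drop. cbn [fst snd]. destruct (lval_lmk u) as (s & t & H1 & _).
  split; intro E.
  - apply lmk_inj in E. eapply lat_equiv_trans; [|exact E].
    apply (lat_equiv_mod _ _ _ _ 0 (- s) 0); lia.
  - apply lmk_eq. eapply lat_equiv_trans; [|exact E].
    apply (lat_equiv_mod _ _ _ _ 0 s 0); lia.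
Qed.

Lemma twist_fixed_iff w : twist w = w <-> drop w = gone.
Proof.
  destruct w as [i w]. rewrite <- (lmk_lval w), twist_lq, drop_lq_equiv.
  split; intro E.
  - apply (f_equal snd), lmk_inj in E. destruct E as (s & t & H1 & H2).
    exists s, t. cbn [fst snd] in *. lia.
  - f_equal. apply lmk_eq. destruct E as (s & t & H1 & H2). exists s, t. cbn [fst snd] in *. lia.
Qed.

(* With N = 4 M E (E = 2^(al-ga-2), using ga < al - 1) and P = D M (D = 2^(ga-si)),
   C(sN, 2) = -sM (mod P) reads s M (1 + 2 E (sN - 1)) = 0 (mod D M); the second factor
   is odd, so D divides s and 2^al = D N divides g. *)
Lemma choose2_lattice_eq0 g : g < 2 ^ al ->
  lat_equiv N M P (Z.of_nat g, Z.of_nat (choose2 g)) (0, 0)%Z -> g = 0.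
Proof.
  intros g_lt (s & t & Hg & Ht). cbn [fst snd] in Hg, Ht.
  set (E := zpow2 (al - ga - 2)).
  assert (HN : N = (M * (4 * E))%Z).
  { rewrite <- (zpow2_mul si (al - ga) (al + si - ga)), <- (zpow2_mul 2 (al - ga - 2) (al - ga))
      by lia. reflexivity. }
  assert (HP : P = (zpow2 (ga - si) * M)%Z) by (apply eq_sym, zpow2_mul; lia).
  assert (HA : zpow2 al = (zpow2 (ga - si) * N)%Z) by (apply eq_sym, zpow2_mul; lia).
  pose proof (double_choose2_Z g) as Hc. rewrite Ht, Hg in Hc.
  assert (Hsu : (s * (1 + 2 * (E * (s * N - 1))) = t * zpow2 (ga - si))%Z).
  { apply (Z.mul_reg_l _ _ M); [pose proof (zpow2_gt0 si); lia|].
    rewrite HP in Hc. rewrite HN in Hc |- *. lia. }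
  destruct (zpow2_dvd_odd (ga - si) s (1 + 2 * (E * (s * N - 1)))) as [m Hm].
  - now rewrite Z.odd_add_mul_2.
  - exists t. exact Hsu.
  - assert (Hgm : Z.of_nat g = (m * zpow2 al)%Z) by (rewrite HA, Hg, Hm; ring).
    assert (Hlt : (0 <= m * zpow2 al < zpow2 al)%Z) by (unfold zpow2 in *; lia).
    pose proof (zpow2_gt0 al). assert (m = 0)%Z by nia. subst m. lia.
Qed.

Lemma A_mulC (u v : A) : u ** v = v ** u.
Proof.
  destruct u as [i w], v as [i' w'].
  change ((i ** i', w ** w') = (i' ** i, w' ** w)).
  now rewrite cyc_mulC, lat_mulC.
Qed.

Lemma zval_cyc1 : zval (cyc_mk _ _ 1) = 1%Z.
Proof.
  unfold zval. rewrite cyc_val_mk, Nat.mod_small; [reflexivity|].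
  apply (Nat.pow_lt_mono_r 2 0 al); lia.
Qed.

Lemma central_K_fst (k : K) : central k -> fst k = gone.
Proof.
  destruct k as [g w]. intro Hk. cbn [fst].
  set (u := (cyc_mk (2 ^ al) (pow2_neq0 al) 1, gone) : A).
  assert (Hu : phi_iter A twist (cyc_val _ _ g) u = u).
  { specialize (Hk (gone, u)). rewrite !sd_mulE, cyc_val1, phi_iter0, A_mulC in Hk.
    apply (f_equal snd), mulIg in Hk. now symmetry. }
  unfold u in Hu. rewrite lat_one, twist_iter, zval_cyc1 in Hu.
  apply (f_equal snd), lmk_inj in Hu. apply cyc_val_inj. rewrite cyc_val1.
  apply choose2_lattice_eq0.
  - rewrite al_eq_be. apply cyc_val_lt.
  - destruct Hu as (s & t & H1 & H2). exists s, t. cbn [fst snd] in *. lia.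
Qed.

Lemma central_K_snd (k : K) : central k -> drop (snd k) = gone.
Proof.
  destruct k as [g w]. intro Hk. cbn [snd]. apply twist_fixed_iff.
  specialize (Hk (cyc1, gone)).
  rewrite !sd_mulE, yval_cyc1, (hom1 _ (phi_iter_hom _ _ twist_hom _)), !gmul1r, gmul1l in Hk.
  now apply (f_equal snd) in Hk.
Qed.

Lemma K_central_of (w : A) : drop w = gone -> central ((gone, w) : K).
Proof.
  intros Hw [g' w']. apply twist_fixed_iff in Hw.
  assert (Hiter : forall k, phi_iter A twist k w = w).
  { induction k; [reflexivity|]. simpl. now rewrite IHk. }
  rewrite !sd_mulE, Hiter, cyc_val1, phi_iter0, gmul1l, gmul1r. f_equal. apply A_mulC.
Qed.

Definition piK : K -> Q := sd_map (2 ^ be) (pow2_neq0 be) A L twist shear twist_hom twist_period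
  shear_hom shear_period drop.

Lemma piK_hom : is_hom piK.
Proof. apply sd_map_hom; [exact drop_hom | exact drop_twist]. Qed.

Lemma piK_surj (q : Q) : exists k : K, piK k = q.
Proof.
  destruct q as [g w]. destruct (lval_nat w) as (p & r & Hw).
  exists (g, (cyc_mk (2 ^ al) (pow2_neq0 al) p, lmk (Z.of_nat r, 0%Z))).
  unfold piK, sd_map, drop. cbn [fst snd]. f_equal.
  rewrite <- (lmk_lval w), Hw. apply lmk_eq.
  destruct (lval_lmk (Z.of_nat r, 0%Z)) as (s & t & H1 & _). cbn [fst snd] in H1.
  unfold zval. rewrite cyc_val_mk.
  pose proof (f_equal Z.of_nat (Nat.div_mod p (2 ^ al) (pow2_neq0 al))) as Hp.
  rewrite Nat2Z.inj_add, Nat2Z.inj_mul in Hp.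
  apply (lat_equiv_mod _ _ _ _ (- Z.of_nat (p / 2 ^ al)) s 0); unfold zpow2 in *; lia.
Qed.

Lemma piK_ker (k : K) : piK k = gone <-> central k.
Proof.
  destruct k as [g w]. split.
  - intro E. assert (Eg : g = gone) by exact (f_equal fst E).
    assert (Ew : drop w = gone) by exact (f_equal snd E).
    subst g. now apply K_central_of.
  - intro Hk. unfold piK, sd_map. cbn [fst snd].
    pose proof (central_K_fst _ Hk) as Eg. pose proof (central_K_snd _ Hk) as Ew.
    cbn [fst snd] in Eg, Ew. now rewrite Eg, Ew.
Qed.

Lemma Q_capable : capable Q.
Proof. exists K, piK. split; [exact piK_hom | split; [exact piK_surj | exact piK_ker]]. Qed.
End Sufficiency.

Lemma Q_capable_iff : capable Q <-> al = be /\ ga < be - 1.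
Proof.
  split.
  - apply (capable_necessary al be ga si si_lt_ga ga2_le ga_lt_be Q xQ yQ Q_rels
      Q_normal_form yQ_half_neq1 cQ_half_neq1).
  - intros [Hab Hga]. exact (Q_capable Hab Hga).
Qed.
End ModelQ.

Theorem corollary6p2 (al be ga si : nat) (G : Grp) (a b : G) :
  be >= ga -> ga > si -> al + si >= 2 * ga -> al + be + si > 3 -> ga < be ->
  presents al be ga si G a b ->
  (capable G <-> (al = be /\ ga < be - 1)).
Proof.
  (* [be >= ga] and [al + be + si > 3] follow from the other hypotheses. *)
  intros _ si_lt_ga ga2_le _ ga_lt_be ab_presents.
  rewrite (presented_capable_iff al be ga si si_lt_ga ga2_le ga_lt_be G a b ab_presents).
  apply Q_capable_iff.
Qed.
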